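(* Let $0<c_1,c_2<1$ and $0<\eta\le1$ be constants and let $m$ be a sufficiently large integer. Let $H$ be a $3$-uniform hypergraph whose vertex set is the disjoint union of sets $A$ and $B$, such that every edge of $H$ contains exactly one vertex of $A$ and two vertices of $B$, with $|A|=c_1 m$ and $|B|\geq c_2 2^{m^2}$. If $d_3\left(A,\binom{B}{2}\right)\geq\eta$, then there exists a complete $3$-partite $3$-uniform hypergraph $H'(A',B',B'')$ contained in $H$, with $A'\subseteq A$, $B'$ and $B''$ disjoint subsets of $B$, and $|A'|=|B'|=|B''|=\eta|A|/2$.
   Context: $d_3\left(A,\binom{B}{2}\right)$ denotes the number of edges of $H$ (each consisting of one vertex of $A$ and a pair from $B$) divided by $|A|\binom{|B|}{2}$. A complete $3$-partite $3$-graph $H'(A',B',B'')$ contains every triple with one vertex in each of $A',B',B''$. *)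

From HB Require Import structures.
From mathcomp Require Import all_boot all_order all_algebra.
From mathcomp Require Import reals.
Set Implicit Arguments. Unset Strict Implicit. Unset Printing Implicit Defensive.
Import Order.TTheory GRing.Theory Num.Theory.
Local Open Scope ring_scope.

Definition AB_hypergraph (V : finType) (A B : {set V}) (E : {set {set V}}) : Prop :=
  [/\ [disjoint A & B], A :|: B = [set: V] &
      forall e, e \in E -> #|e| = 3%N /\ #|e :&: A| = 1%N /\ #|e :&: B| = 2%N].

Definition d3 (R : realType) (V : finType) (A B : {set V}) (E : {set {set V}}) : R :=
  (#|E|%:R) / ((#|A| * 'C(#|B|, 2))%N%:R).

Definition contains_K3 (V : finType) (E : {set {set V}}) (A' B' B'' : {set V}) : Prop :=
  forall a b c, a \in A' -> b \in B' -> c \in B'' -> [set a; b; c] \in E.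

From HB Require Import structures.
From mathcomp Require Import all_boot all_order all_algebra.
From mathcomp Require Import reals.
From mathcomp Require Import zify ring lra.
Import Order.TTheory GRing.Theory Num.Theory.
Set Implicit Arguments. Unset Strict Implicit. Unset Printing Implicit Defensive.

(* Call link (b, c) the set of a in A with {a, b, c} in E, for an ordered pair
   (b, c) of B.  Counting edges through links, the density hypothesis forces
   about an eta/2 proportion of the pairs to have links of size at least
   t = ceil(eta |A| / 2).  Since A has at most 2^|A| subsets S of size t, one
   such S lies in the link of a 2^(-|A|-O(1)) proportion of all pairs: these
   pairs form a dense bipartite graph on B x B.  As |B| >= 2^((|A|+O(1))^2),
   the Kovari-Sos-Turan double count of t-subsets of neighbourhoods yields B'
   and B'' of size t with S in the link of every pair of B' x B''; they are
   disjoint because no edge repeats a vertex. *)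

Definition ksubsets (T : finType) (A : {set T}) k :=
  [set S : {set T} | S \subset A & #|S| == k].

Lemma card_ksubsets (T : finType) (A : {set T}) k : #|ksubsets A k| = 'C(#|A|, k).
Proof. exact: cards_draws. Qed.

Lemma exists_ksubset (T : finType) (A : {set T}) k :
  k <= #|A| -> exists2 S : {set T}, S \subset A & #|S| = k.
Proof.
rewrite -bin_gt0 -card_ksubsets => /card_gt0P[S]; rewrite inE => /andP[SA /eqP cS].
by exists S.
Qed.

Lemma sum_nat_indicator (I : finType) (P Q : pred I) :
  \sum_(i | P i) (Q i : nat) = #|[set i | P i && Q i]|.
Proof.
rewrite -sum1_card big_mkcond [RHS]big_mkcond /=; apply: eq_bigr => i _.
by rewrite inE; case: (P i); case: (Q i).
Qed.

Lemma sum_le_markov (I : finType) (P : pred I) (f : I -> nat) M t :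
  (forall i, P i -> f i <= M) ->
  \sum_(i | P i) f i <= #|[set i | P i && (t <= f i)]| * M + #|[set i | P i]| * t.-1.
Proof.
move=> fM; rewrite (bigID (fun i => t <= f i)) /= -!sum_nat_cond_const.
apply: leq_add; first by apply: leq_sum => i /andP[/fM].
rewrite [X in _ <= X](bigID (fun i => t <= f i)) /=; apply: leq_trans (leq_addl _ _).
by apply: leq_sum => i /andP[_]; rewrite -ltnNge; case: t.
Qed.

Lemma sum_le_card_mul_max (I : finType) (A : {set I}) (f : I -> nat) :
  A != set0 -> exists2 i, i \in A & \sum_(j in A) f j <= #|A| * f i.
Proof.
case/set0Pn=> i0 Ai0; case: (@arg_maxnP _ i0 (mem A) f Ai0) => i Ai fi_max.
by exists i; rewrite // -sum_nat_const leq_sum.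
Qed.

Section Biclique.
Variables (X Y : finType) (r : X -> Y -> bool).

Definition nbhd x := [set y | r x y].

Lemma card_rel_sum_nbhd (X0 : {set X}) :
  (forall x y, r x y -> x \in X0) ->
  #|[set p : X * Y | r p.1 p.2]| = \sum_(x in X0) #|nbhd x|.
Proof.
move=> rX0; rewrite -sum1dep_card.
under [RHS]eq_bigr do rewrite -sum1dep_card.
rewrite pair_big_dep /=; apply: eq_bigl => p.
by apply/idP/andP => [rp | []//]; split=> //; apply: rX0 rp.
Qed.

Lemma biclique_of_high_degrees (Y0 : {set Y}) t D :
  (forall x y, r x y -> y \in Y0) ->
  t.-1 * 'C(#|Y0|, t) < #|[set x | D <= #|nbhd x|]| * 'C(D, t) ->
  exists (S : {set X}) (T : {set Y}),
    [/\ #|S| = t, #|T| = t & forall x y, x \in S -> y \in T -> r x y].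
Proof.
move=> rY0 many_high.
(* If every t-subset T of Y0 had fewer than t common neighbours, counting the
   pairs (T, x) with T in the neighbourhood of x would contradict [many_high]. *)
pose common (T : {set Y}) := [set x | T \subset nbhd x].
have double_count :
    \sum_(T in ksubsets Y0 t) #|common T| = \sum_x 'C(#|nbhd x|, t).
  rewrite (eq_bigr (fun T : {set Y} => \sum_x (T \subset nbhd x : nat))); last first.
    by move=> T _; rewrite sum_nat_indicator; apply: eq_card => x; rewrite !inE.
  rewrite exchange_big /=; apply: eq_bigr => x _.
  rewrite -card_ksubsets sum_nat_indicator; apply: eq_card => T; rewrite !inE.
  case: (boolP (T \subset nbhd x)) => [Tx | ]; rewrite ?andbF ?andbT //.
  by rewrite (subset_trans Tx) //; apply/subsetP => y; rewrite inE => /rY0.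
have [T] : exists2 T, T \in ksubsets Y0 t & t <= #|common T|.
  apply/exists_inP; apply: contraLR many_high => /exists_inPn few; rewrite -leqNgt.
  apply: (@leq_trans (\sum_(T in ksubsets Y0 t) #|common T|)); last first.
    rewrite mulnC -card_ksubsets -sum_nat_const; apply: leq_sum => T /few.
    by rewrite -ltnNge; case: t {few double_count}.
  rewrite double_count -sum_nat_cond_const.
  apply: (@leq_trans (\sum_(x | D <= #|nbhd x|) 'C(#|nbhd x|, t))).
    by apply: leq_sum => x; apply: leq_bin2l.
  by rewrite [X in _ <= X](bigID (fun x => D <= #|nbhd x|)) leq_addr.
rewrite inE => /andP[_ /eqP cT] /exists_ksubset[S Scommon cS].
exists S, T; split=> // x y /(subsetP Scommon); rewrite inE => /subsetP Tx /Tx.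
by rewrite inE.
Qed.

End Biclique.

Lemma bin_ffact_le_exp n t : 'C(n, t) * t`! <= n ^ t.
Proof.
have -> : n ^ t = \prod_(i < t) n by rewrite prod_nat_const card_ord.
rewrite bin_ffact ffact_prod.
by apply: leq_prod => i _; apply: leq_subr.
Qed.

Lemma exp_sub_le_bin_ffact n t : (n - t) ^ t <= 'C(n, t) * t`!.
Proof.
have -> : (n - t) ^ t = \prod_(i < t) (n - t) by rewrite prod_nat_const card_ord.
rewrite bin_ffact ffact_prod.
by apply: leq_prod => i _; apply/leq_sub2l/ltnW.
Qed.

Section BicliqueArithmetic.
Variables (N s : nat).
(* The degree threshold is a quarter of the average degree N / 2^s. *)
Let D := N %/ 2 ^ (s + 2).

Lemma many_high_degree_vertices e G :
  8 <= N -> N * N <= 2 ^ s * e + 2 * N -> e <= G * N + N * D.-1 ->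
  N <= 2 ^ (s + 1) * G.
Proof.
move=> N8 dense markov.
have light : 4 * (2 ^ s * D.-1) <= N.
  apply: leq_trans (leq_divM N (2 ^ (s + 2))).
  rewrite -/D expnD; have := leq_pred D; nia.
have split_dense : N * N <= 2 ^ s * G * N + N * (2 ^ s * D.-1) + 2 * N.
  apply: leq_trans dense _; rewrite leq_add2r.
  by apply: leq_trans (leq_mul (leqnn _) markov) _; rewrite mulnDr; lia.
rewrite expnD; move: light split_dense; set u := 2 ^ s => light split_dense.
have : N * (2 * N) <= N * (4 * (u * G)) by nia.
rewrite leq_pmul2l; [lia | exact: leq_trans N8].
Qed.

Lemma divn_sub_lower_bound t :
  2 ^ (s + 3) * t.+1 <= N -> N <= 2 ^ (s + 3) * (D - t).
Proof.
have -> : 2 ^ (s + 3) = 2 * 2 ^ (s + 2) by rewrite !addnS expnS.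
have := ltn_ceil N (expn_gt0 2 (s + 2)); rewrite -/D.
move: D (2 ^ (s + 2)) => q d; rewrite mulnBr mulSn mulnS; nia.
Qed.

Lemma biclique_threshold e G t :
  0 < t <= s -> 2 ^ ((s + 3) ^ 2) <= N ->
  N * N <= 2 ^ s * e + 2 * N -> e <= G * N + N * D.-1 ->
  t.-1 * 'C(N, t) < G * 'C(D, t).
Proof.
move=> /andP[t0 ts] N_large dense markov.
have large a : a <= (s + 3) ^ 2 -> 2 ^ a <= N.
  by move=> ab; apply: leq_trans N_large; rewrite leq_pexp2l.
have t_small : t < 2 ^ s by apply: leq_ltn_trans ts (ltn_expl _ _).
have G_large : N <= 2 ^ (s + 1) * G.
  by apply: many_high_degree_vertices dense markov; apply: (large 3); nia.
have D_large : N <= 2 ^ (s + 3) * (D - t).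
  apply: divn_sub_lower_bound; apply: leq_trans (large (s + 3 + s) _); last by nia.
  by rewrite [X in _ <= X]expnD leq_mul2l t_small orbT.
pose K := 2 ^ (s + 1) * 2 ^ ((s + 3) * t).
have K_small : t.-1 * K < N.
  apply: (@leq_trans (2 ^ s * (2 ^ (s + 1) * 2 ^ ((s + 3) * s)))); last first.
    by rewrite -!expnD; apply: large; nia.
  apply: (@leq_ltn_trans (t.-1 * (2 ^ (s + 1) * 2 ^ ((s + 3) * s)))).
    by rewrite leq_mul2l leq_mul2l leq_pexp2l ?leq_mul2l ?ts ?orbT.
  rewrite ltn_pmul2r ?muln_gt0 ?expn_gt0 //.
  by apply: leq_ltn_trans t_small; apply: leq_pred.
have K0 : 0 < K by rewrite muln_gt0 !expn_gt0.
have Nt0 : 0 < N ^ t by rewrite expn_gt0 (leq_trans _ (large 1 _)) //; nia.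
have key : t.-1 * N ^ t < G * (D - t) ^ t.
  rewrite -(ltn_pmul2l K0); apply: (@leq_trans (N * N ^ t)).
    by rewrite mulnA [K * _]mulnC ltn_pmul2r.
  apply: (@leq_trans (2 ^ (s + 1) * G * (2 ^ (s + 3) * (D - t)) ^ t)).
    by apply: leq_mul; rewrite // leq_exp2r.
  by rewrite /K expnMn expnM; apply: eq_leq; ring.
rewrite -(ltn_pmul2r (fact_gt0 t)) -mulnA.
apply: leq_ltn_trans (leq_mul (leqnn _) (bin_ffact_le_exp N t)) _.
by apply: leq_trans key _; rewrite -mulnA leq_mul2l exp_sub_le_bin_ffact orbT.
Qed.
End BicliqueArithmetic.

Lemma biclique_of_dense (X Y : finType) (r : X -> Y -> bool)
    (X0 : {set X}) (Y0 : {set Y}) N s t :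
  (forall x y, r x y -> (x \in X0) && (y \in Y0)) ->
  #|X0| <= N -> #|Y0| <= N ->
  0 < t <= s -> 2 ^ ((s + 3) ^ 2) <= N ->
  N * N <= 2 ^ s * #|[set p : X * Y | r p.1 p.2]| + 2 * N ->
  exists (S : {set X}) (T : {set Y}),
    [/\ S \subset X0, T \subset Y0, #|S| = t, #|T| = t
       & forall x y, x \in S -> y \in T -> r x y].
Proof.
move=> rXY X0N Y0N ts N_large dense.
have rX0 x y : r x y -> x \in X0 by case/rXY/andP.
have rY0 x y : r x y -> y \in Y0 by case/rXY/andP.
pose D := N %/ 2 ^ (s + 2).
pose G := #|[set x | D <= #|nbhd r x|]|.
have markov : #|[set p : X * Y | r p.1 p.2]| <= G * N + N * D.-1.
  rewrite (card_rel_sum_nbhd rX0); apply: leq_trans (sum_le_markov D _) _.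
    move=> x _; apply: leq_trans Y0N; apply: subset_leq_card.
    by apply/subsetP => y; rewrite inE => /rY0.
  apply: leq_add; apply: leq_mul => //.
    by apply: subset_leq_card; apply/subsetP => x; rewrite !inE => /andP[].
  by apply: leq_trans _ X0N; apply: subset_leq_card; apply/subsetP => x; rewrite inE.
have [|S [T [cS cT K]]] := biclique_of_high_degrees (t := t) (D := D) rY0.
  apply: leq_ltn_trans (biclique_threshold ts N_large dense markov).
  by rewrite leq_mul2l leq_bin2l ?orbT.
have [[x xS] [y yT]] : (exists x, x \in S) /\ (exists y, y \in T).
  by case/andP: ts => t0 _; split; apply/card_gt0P; rewrite ?cS ?cT.
exists S, T; split=> //; apply/subsetP.
  by move=> x' x'S; apply: rX0 (K _ _ x'S yT).
by move=> y' y'T; apply: rY0 (K _ _ xS y'T).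
Qed.

Section ABHypergraph.
Variables (V : finType) (A B : {set V}) (E : {set {set V}}).
Hypothesis AB_E : AB_hypergraph A B E.

Definition link (p : V * V) := [set a in A | [set a; p.1; p.2] \in E].

Definition heavy_pairs t :=
  [set p : V * V | [&& p.1 \in B, p.2 \in B & t <= #|link p|]].

Definition pairs_over (S : {set V}) :=
  [set p : V * V | [&& p.1 \in B, p.2 \in B & S \subset link p]].

Lemma link_sub p : link p \subset A.
Proof. by apply/subsetP => a; rewrite inE => /andP[]. Qed.

Lemma link_diag b : link (b, b) = set0.
Proof.
apply/setP => a; rewrite !inE /=; apply/negbTE/nandP; right; apply/negP => edge.
case: AB_E => _ _ /(_ _ edge)[+ _].
have -> : [set a; b; b] = [set a; b] by apply/setP => x; rewrite !inE -orbA orbb.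
by rewrite cards2; case: (a != b).
Qed.

Lemma AB_edge_shape e : e \in E ->
  exists a b c, [/\ a \in A, b \in B, c \in B, b != c & e = [set a; b; c]].
Proof.
case: AB_E => _ AUB edge_split /edge_split[_ [/eqP/cards1P[a eA] /eqP/cards2P[b [c [bc eB]]]]].
have: a \in e :&: A by rewrite eA set11.
have: b \in e :&: B by rewrite eB set21.
have: c \in e :&: B by rewrite eB set22.
rewrite !inE => /andP[_ cB] /andP[_ bB] /andP[_ aA].
exists a, b, c; split=> //.
by rewrite -[e]setIT -AUB setIUr eA eB setUA.
Qed.

Lemma double_card_edges_le :
  2 * #|E| <= \sum_(p | (p.1 \in B) && (p.2 \in B)) #|link p|.
Proof.
rewrite (eq_bigr (fun p => \sum_(a | (a \in A) && ([set a; p.1; p.2] \in E)) 1)); last first.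
  by move=> p _; rewrite sum1dep_card.
rewrite pair_big_dep /=.
rewrite (partition_big (fun x : (V * V) * V => [set x.2; x.1.1; x.1.2]) (mem E)); last first.
  by move=> x /andP[_ /andP[]].
rewrite mulnC -sum_nat_const leq_sum // => e eE.
have [a [b [c [aA bB cB bc def_e]]]] := AB_edge_shape eE.
have acb : [set a; c; b] = [set a; b; c].
  by apply/setP => x; rewrite !inE orbAC.
have -> : 2 = #|[set ((b, c), a); ((c, b), a)]| by rewrite cards2 !xpair_eqE (negbTE bc).
rewrite sum1_card; apply: subset_leq_card; apply/subsetP => x.
by rewrite !inE => /orP[] /eqP ->; rewrite unfold_in /= aA bB cB ?acb -def_e eE eqxx.
Qed.

Lemma double_card_edges_le_heavy t :
  2 * #|E| <= #|heavy_pairs t| * #|A| + #|B| * #|B| * t.-1.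
Proof.
apply: leq_trans double_card_edges_le _.
apply: leq_trans (sum_le_markov t (fun p _ => subset_leq_card (link_sub p))) _.
rewrite -[#|B| * #|B|]cardsX; apply: leq_add; rewrite leq_mul2r; apply/orP; right.
  by apply/subset_leq_card/subsetP => p; rewrite !inE andbA.
by apply/subset_leq_card/subsetP => p; rewrite !inE.
Qed.

Lemma card_heavy_le_sum_pairs_over t :
  #|heavy_pairs t| <= \sum_(S in ksubsets A t) #|pairs_over S|.
Proof.
rewrite (eq_bigr (fun S => \sum_p (p \in pairs_over S : nat))); last first.
  by move=> S _; rewrite sum_nat_indicator; apply: eq_card => p; rewrite inE.
rewrite exchange_big (bigID (mem (heavy_pairs t))) -sum1_card /=.
apply: leq_trans (leq_addr _ _); apply: leq_sum => p.
rewrite inE => /and3P[p1 p2 /exists_ksubset[S Slink cS]].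
rewrite sum_nat_indicator; apply/card_gt0P; exists S.
by rewrite !inE p1 p2 Slink (subset_trans Slink (link_sub p)) cS eqxx.
Qed.

Lemma exists_dense_pairs_over t : t <= #|A| ->
  exists2 S, S \in ksubsets A t & #|heavy_pairs t| <= 2 ^ #|A| * #|pairs_over S|.
Proof.
move=> tA.
have [|S kS sum_le] := sum_le_card_mul_max (fun S => #|pairs_over S|) (A := ksubsets A t).
  by rewrite -card_gt0 card_ksubsets bin_gt0.
exists S => //; apply: leq_trans (card_heavy_le_sum_pairs_over t) (leq_trans sum_le _).
rewrite leq_mul2r -card_powerset subset_leq_card ?orbT //.
by apply/subsetP => S'; rewrite !inE => /andP[].
Qed.

Lemma K3_of_many_heavy_pairs k t :
  0 < t <= #|A| -> 2 ^ ((#|A| + k + 4) ^ 2) <= #|B| ->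
  #|B| * #|B| <= 2 ^ (k + 1) * #|heavy_pairs t| + 2 * #|B| ->
  exists A' B' B'' : {set V},
    [/\ A' \subset A, B' \subset B, B'' \subset B & [disjoint B' & B'']] /\
    contains_K3 E A' B' B'' /\ [/\ #|A'| = t, #|B'| = t & #|B''| = t].
Proof.
move=> /andP[t0 tA] B_large dense.
have [S] := exists_dense_pairs_over tA; rewrite inE => /andP[SA /eqP cS] heavy_le.
pose r b c := (b, c) \in pairs_over S.
have [||||B' [B'' [B'B B''B cardB' cardB'' K]]] :=
  @biclique_of_dense _ _ r B B #|B| (#|A| + k + 1) t _ (leqnn _) (leqnn _).
- by move=> b c; rewrite /r inE => /and3P[-> ->].
- by rewrite t0 (leq_trans tA) // -addnA leq_addr.
- by apply: leq_trans B_large; rewrite leq_pexp2l //; lia.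
- apply: leq_trans dense _; rewrite leq_add2r.
  have -> : #|[set p : V * V | r p.1 p.2]| = #|pairs_over S|.
    by apply: eq_card => -[b c]; rewrite inE.
  by rewrite -addnA [2 ^ (_ + (k + 1))]expnD -mulnA mulnCA leq_mul2l heavy_le orbT.
exists S, B', B''; split; [split=> // | split].
- rewrite -setI_eq0; apply/set0Pn => -[x]; rewrite inE => /andP[xB' xB''].
  move: (K x x xB' xB''); rewrite /r inE link_diag subset0 => /and3P[_ _ /eqP S0].
  by move: t0; rewrite -cS S0 cards0.
- move=> a b c aS bB' cB''; move: (K b c bB' cB''); rewrite /r inE => /and3P[_ _].
  by move/subsetP/(_ a aS); rewrite inE => /andP[].
- by [].
Qed.

End ABHypergraph.

Local Open Scope ring_scope.

Lemma natr_mul_pred (R : pzRingType) (N : nat) : (N * N.-1)%:R = N%:R * (N%:R - 1) :> R.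
Proof. by case: N => [|N]; rewrite ?mul0r // natrM -natr1 addrK. Qed.

Lemma exists_half_ceil (R : archiRealFieldType) (x : R) (n : nat) :
  0 <= x <= n%:R -> (0 < n)%N ->
  exists t : nat, [/\ (0 < t <= n)%N, 2 * t.-1%:R <= x & x / 2 <= t%:R].
Proof.
move=> /andP[x0 xn] n0; have x20 : 0 <= x / 2 by rewrite divr_ge0.
exists (Num.truncn (x / 2)).+1; split => /=.
- rewrite truncn_lt_nat // ltr_pdivrMr ?ltr0n //; apply: le_lt_trans xn _.
  by rewrite -natrM ltr_nat; lia.
- by rewrite mulrC -ler_pdivlMr ?ltr0n // truncn_le.
- exact/ltW/truncnS_gt.
Qed.

Lemma exists_pow2_mul_ge1 (R : archiRealFieldType) (x : R) :
  0 < x -> exists k : nat, 1 <= 2%:R ^+ k * x.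
Proof.
move=> x0; exists (Num.truncn x^-1).+1; rewrite -ler_pdivrMr // mul1r.
apply/ltW/(lt_le_trans (truncnS_gt _)).
by rewrite -natrX ler_nat ltnW // ltn_expl.
Qed.

Lemma eventually_pow2_sq_le (R : archiRealFieldType) (c1 c2 : R) (k : nat) :
  0 < c1 < 1 -> 0 < c2 ->
  exists M : nat, forall m n N : nat, (M <= m)%N ->
    n%:R = c1 * m%:R -> c2 * 2%:R ^+ (m ^ 2) <= N%:R ->
    (0 < n)%N /\ (2 ^ ((n + k + 4) ^ 2) <= N)%N.
Proof.
move=> /andP[c10 c11] c20.
have [j c2j] := exists_pow2_mul_ge1 c20.
have c1' : 0 < 1 - c1 by rewrite subr_gt0.
pose q := (Num.truncn (1 - c1)^-1).+1.
have q_large : 1 <= q%:R * (1 - c1).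
  by rewrite -ler_pdivrMr // mul1r; apply/ltW/truncnS_gt.
exists (q * (k + j + 4)).+1 => m n N mM def_n N_large; split.
  by rewrite -(ltr_nat R) def_n mulr_gt0 // ltr0n (leq_trans _ mM).
have n_small : (n + (k + j + 4) <= m)%N.
  rewrite -(ler_nat R) natrD def_n.
  have : (q * (k + j + 4))%:R <= m%:R :> R by rewrite ler_nat ltnW.
  rewrite natrM; have : 0 <= (k + j + 4)%:R :> R by [].
  move: (k + j + 4)%:R (q%:R) (m%:R) q_large => K qq mm; nra.
have sq : ((n + k + 4) ^ 2 + j <= m ^ 2)%N by nia.
rewrite -(leq_pmul2l (expn_gt0 2 j)) mulnC -expnD.
apply: leq_trans (leq_pexp2l _ sq) _ => //; rewrite -(ler_nat R) natrM !natrX.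
apply: le_trans (ler_wpM2l _ N_large); last by rewrite exprn_ge0.
by rewrite mulrA ler_peMl ?exprn_ge0 // mulrC.
Qed.

Lemma many_heavy_pairs (R : realFieldType) (eta : R) (n N e h t k : nat) :
  0 < eta -> 1 <= 2%:R ^+ k * eta -> (0 < n)%N ->
  2 * t.-1%:R <= eta * n%:R ->
  eta * (n * 'C(N, 2))%:R <= e%:R ->
  (2 * e <= h * n + N * N * t.-1)%N ->
  (N * N <= 2 ^ (k + 1) * h + 2 * N)%N.
Proof.
move=> eta0 k_eta n0 t_small dens markov.
(* Light pairs carry at most N^2 (t - 1) <= N^2 eta n / 2 of the link sizes. *)
rewrite -(ler_nat R) in markov; rewrite -(ler_nat R).
have bin2 : (2 * 'C(N, 2))%:R = N%:R * (N%:R - 1) :> R.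
  by rewrite mulnC bin_ffact ffactnS ffactn1 natr_mul_pred.
rewrite !natrM in dens bin2; rewrite !natrD !natrM natrX addn1 exprSr in markov *.
set x := N%:R in markov bin2 *; set y := t.-1%:R in markov t_small.
set nn := n%:R in markov dens t_small; set P := h%:R in markov *.
set C := 'C(N, 2)%:R in dens bin2; set u := 2%:R ^+ k in k_eta *.
have [x0 y0 P0 u0] : [/\ 0 <= x, 0 <= y, 0 <= P & 0 <= u] by rewrite !ler0n exprn_ge0.
have nn0 : 0 < nn by rewrite ltr0n.
have x2y : 2 * (x * x * y) <= x * x * (eta * nn) by rewrite mulrCA ler_wpM2l ?mulr_ge0.
have : nn * (eta * (x * x - 2 * x)) <= nn * (2 * P) by nra.
rewrite ler_pM2l // => key.
have [neg|pos] := lerP (x * x - 2 * x) 0; first by nra.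
have : x * x - 2 * x <= u * eta * (x * x - 2 * x) by rewrite ler_peMl // ltW.
nra.
Qed.

Lemma card_edges_ge_d3 (R : realType) (V : finType) (A B : {set V}) (E : {set {set V}}) (eta : R) :
  0 < eta -> eta <= d3 R A B E -> eta * (#|A| * 'C(#|B|, 2))%:R <= #|E|%:R.
Proof.
rewrite /d3 => eta0; case: (posnP (#|A| * 'C(#|B|, 2))) => [-> | den0].
  by rewrite invr0 mulr0 => /(lt_le_trans eta0); rewrite ltxx.
by rewrite ler_pdivlMr ?ltr0n.
Qed.

Theorem lemma5 (R : realType) (c1 c2 eta : R) :
  0 < c1 < 1 -> 0 < c2 < 1 -> 0 < eta <= 1 ->
  exists M : nat, forall m : nat, (M <= m)%N ->
  forall (V : finType) (A B : {set V}) (E : {set {set V}}),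
    AB_hypergraph A B E ->
    (#|A|%:R = c1 * m%:R) ->
    (c2 * 2%:R ^+ (m ^ 2) <= #|B|%:R) ->
    eta <= d3 R A B E ->
    exists A' B' B'' : {set V},
      [/\ A' \subset A, B' \subset B, B'' \subset B & [disjoint B' & B'']] /\
      contains_K3 E A' B' B'' /\
      [/\ #|A'| = #|B'|, #|B'| = #|B''| & eta * #|A|%:R / 2%:R <= #|A'|%:R].
Proof.
move=> c1_bounds /andP[c20 _] /andP[eta0 eta1].
have [k k_eta] := exists_pow2_mul_ge1 eta0.
have [M huge] := eventually_pow2_sq_le k c1_bounds c20.
exists M => m mM V A B E AB_E cardA cardB dense.
have [A0 B_large] := huge m #|A| #|B| mM cardA cardB.
have [t [t_range t_small t_large]] : exists t : nat,
    [/\ (0 < t <= #|A|)%N, 2 * t.-1%:R <= eta * #|A|%:R & eta * #|A|%:R / 2 <= t%:R].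
  by apply: exists_half_ceil A0; rewrite mulr_ge0 ?(ltW eta0) //= ler_piMl.
have heavy := many_heavy_pairs eta0 k_eta A0 t_small (card_edges_ge_d3 eta0 dense)
  (double_card_edges_le_heavy AB_E t).
have [A' [B' [B'' [subs [K3 [cA' cB' cB'']]]]]] :=
  K3_of_many_heavy_pairs AB_E t_range B_large heavy.
by exists A', B', B''; rewrite cA' cB' cB''.
Qed.
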